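(* Let $\mathtt{L}$ be a line of $\mathcal{S}$ and $\theta$ a point of $\mathcal{S}$. If $\theta$ has distance $3$ from two points of $\mathtt{L}$, then $\theta$ has distance $2$ from the third point of $\mathtt{L}$.
   Context: Let $S=(P,L)$ and $S'=(P',L')$ be generalized quadrangles of order $(2,2)$ (every line has 3 points, every point lies on 3 lines, and for each point $x$ and line $l\not\ni x$ exactly one point of $l$ is collinear with $x$), with an isomorphism $x\mapsto x'$ from $S$ to $S'$. In a point-line geometry, $x^{\perp}$ is $x$ together with all points collinear with $x$, and $A^{\perp}=\bigcap_{a\in A}a^{\perp}$. A triad is a set of three pairwise non-collinear points, complete if $|T^{\perp}|=3$. The geometry $\mathcal{S}=(\mathcal{P},\mathcal{L})$ has point set $\mathcal{P}=\{(x,y')\in P\times P':y'\in x'^{\perp}\}$ and lines all $3$-subsets $\{(x,u'),(y,v'),(z,w')\}$ of $\mathcal{P}$ where $T=\{x,y,z\}$ (three distinct points) is a line or a complete triad of $S$ and $\{u',v',w'\}=T'^{\perp}$ in $S'$ with $u',v',w'$ distinct. Distance is measured in the collinearity graph of $\mathcal{S}$. *)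

From mathcomp Require Import all_boot.
Set Implicit Arguments. Unset Strict Implicit. Unset Printing Implicit Defensive.

Definition collinear (T : finType) (L : {set {set T}}) (x y : T) : bool :=
  (x != y) && [exists l in L, (x \in l) && (y \in l)].

Definition perp (T : finType) (L : {set {set T}}) (x : T) : {set T} :=
  [set y | (y == x) || collinear L x y].

Definition perpS (T : finType) (L : {set {set T}}) (A : {set T}) : {set T} :=
  \bigcap_(a in A) perp L a.

Definition is_GQ22 (T : finType) (L : {set {set T}}) : Prop :=
  [/\ forall l, l \in L -> #|l| = 3,
      forall x : T, #|[set l in L | x \in l]| = 3
    & forall (x : T) l, l \in L -> x \notin l ->
        #|[set y in l | collinear L x y]| = 1].

Definition triad (T : finType) (L : {set {set T}}) (A : {set T}) : bool :=
  (#|A| == 3) && [forall x in A, forall y in A, (x != y) ==> ~~ collinear L x y].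

Definition complete_triad (T : finType) (L : {set {set T}}) (A : {set T}) : bool :=
  triad L A && (#|perpS L A| == 3).

Definition geom_iso (P P' : finType) (L : {set {set P}}) (L' : {set {set P'}})
  (f : P -> P') : Prop :=
  bijective f /\ forall l : {set P}, (l \in L) = (f @: l \in L').

Definition calP (P P' : finType) (L' : {set {set P'}}) (f : P -> P') : {set P * P'} :=
  [set p | p.2 \in perp L' (f p.1)].

Definition calL (P P' : finType) (L : {set {set P}}) (L' : {set {set P'}})
  (f : P -> P') : {set {set P * P'}} :=
  [set X : {set P * P'} |
    let T := [set p.1 | p in X] in
    [&& X \subset calP L' f, #|X| == 3, #|T| == 3,
        (T \in L) || complete_triad L T,
        #|[set p.2 | p in X]| == 3 &
        [set p.2 | p in X] == perpS L' (f @: T)]].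

Definition gdist (T : finType) (L : {set {set T}}) (x y : T) (n : nat) : Prop :=
  (exists s : seq T, [/\ path (collinear L) x s, last x s = y & size s = n]) /\
  (forall s : seq T, path (collinear L) x s -> last x s = y -> n <= size s).

From mathcomp Require Import all_boot.
Set Implicit Arguments. Unset Strict Implicit. Unset Printing Implicit Defensive.

(* The map (x, y') |-> (f x, y') identifies calS with the same construction
   for S' and the identity, so we may assume S' = S and f = id. Call
   s = (p, q) and t = (y, v) matched when p ~ v iff q ~ y (~ meaning equal or
   collinear). Every pair x != y of a GQ(2,2) spans a line or a complete triad
   T with T^perp = {x, y}^perp (all points are regular), so (x, u) and (y, v)
   are collinear in calS as soon as x != y, u != v and u, v lie in
   {x, y}^perp; from this, matched points are at distance at most 2.
   Conversely every line {a, b, c} of calS contains a point matched with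
   theta = (p, q): its two projections T and T^perp are lines or complete
   triads, each determined by any two of its points and with T^perp^perp = T,
   so if theta were unmatched with all three points, then by pigeonhole q
   would be collinear with two points of T or p with two points of T^perp,
   forcing q into T^perp or p into T, which yields a matched point after all.
   Hence c is matched, at distance at most 2, and at distance at least 2
   since it is collinear with a, at distance 3. *)

Section ThreeSets.
Variable U : finType.
Implicit Types (A : {set U}) (a b c x y : U).

Lemma set3P x a b c : reflect [\/ x = a, x = b | x = c] (x \in [set a; b; c]).
Proof.
rewrite !inE -orbA; apply: (iffP or3P) => -[] /eqP ?;
  by [constructor 1 | constructor 2 | constructor 3].
Qed.

Lemma cards3 a b c : a != b -> a != c -> b != c -> #|[set a; b; c]| = 3.
Proof. by move=> ab ac bc; rewrite -setUA cardsU1 cards2 bc !inE negb_or ab ac. Qed.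

Lemma cards3_le a b c : #|[set a; b; c]| <= 3.
Proof. by rewrite -setUA cardsU1 cards2; case: (_ \notin _); case: (b != c). Qed.

Lemma card3_eq A a b c : #|A| = 3 -> a \in A -> b \in A -> c \in A ->
  a != b -> a != c -> b != c -> A = [set a; b; c].
Proof.
move=> A3 aA bA cA ab ac bc; apply/eqP; rewrite eq_sym eqEcard A3 cards3 // leqnn andbT.
by apply/subsetP => z /set3P[]->.
Qed.

Lemma card3_avoid2 A x y : 2 < #|A| -> exists z, [/\ z \in A, z != x & z != y].
Proof.
move=> A3; have : 0 < #|A :\: [set x; y]|.
  rewrite cardsD subn_gt0; apply: leq_ltn_trans A3.
  by apply: leq_trans (subset_leq_card (subsetIr _ _)) _; rewrite cards2; case: (x != y).
by case/card_gt0P => z; rewrite !inE negb_or => /andP[/andP[zx zy] zA]; exists z.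
Qed.

Lemma imset3 (V : finType) (f : U -> V) a b c : f @: [set a; b; c] = [set f a; f b; f c].
Proof. by rewrite !imsetU !imset_set1. Qed.

End ThreeSets.

Section Paths.
Variables (U : finType) (M : {set {set U}}).

Lemma collinear_sym (x y : U) : collinear M x y = collinear M y x.
Proof.
rewrite /collinear eq_sym; congr (_ && _).
by apply/existsP/existsP => -[l /and3P[lM xl yl]]; exists l; rewrite lM xl yl.
Qed.

Definition dist_le (x y : U) (n : nat) : Prop :=
  exists s, [/\ path (collinear M) x s, last x s = y & size s <= n].

Lemma dist_le_refl x n : dist_le x x n.
Proof. by exists [::]. Qed.

Lemma dist_le_col x y n : collinear M x y -> dist_le x y n.+1.
Proof. by move=> xy; exists [:: y]; rewrite /= xy. Qed.

Lemma dist_le_path2 x m y n : collinear M x m -> collinear M m y -> dist_le x y n.+2.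
Proof. by move=> xm my; exists [:: m; y]; rewrite /= xm my. Qed.

Lemma gdist_dist_le x y n : gdist M x y n.+1 -> ~ dist_le x y n.
Proof. by move=> [_ min] [s [xs sy]]; rewrite leqNgt (min s xs sy). Qed.

Lemma gdist_of_dist_le x a c n : dist_le x c n -> collinear M c a ->
  gdist M x a n.+1 -> gdist M x c n.
Proof.
move=> [s [xs sc sn]] ca [_ min].
have lower t : path (collinear M) x t -> last x t = c -> n <= size t.
  move=> xt tc; rewrite -ltnS -(size_rcons t a) min ?last_rcons //.
  by rewrite rcons_path xt tc.
split=> //; exists s; split=> //.
by apply/eqP; rewrite eqn_leq sn lower.
Qed.

End Paths.

Section GQ.
Variables (T : finType) (L : {set {set T}}).
Hypothesis GQ : is_GQ22 L.

Local Notation perp := (perp L).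
Local Notation perpS := (perpS L).
Implicit Types (x y z p q : T) (A B l : {set T}).

Lemma perp_sym x y : (y \in perp x) = (x \in perp y).
Proof. by rewrite !inE eq_sym collinear_sym. Qed.

Lemma perp_refl x : x \in perp x.
Proof. by rewrite inE eqxx. Qed.

Lemma notperp_neq x y : y \notin perp x -> x != y.
Proof. by apply: contraNneq => ->; apply: perp_refl. Qed.

Lemma perpSP A z : reflect (forall a, a \in A -> z \in perp a) (z \in perpS A).
Proof. exact: bigcapP. Qed.

Lemma perpS2E x y z : (z \in perpS [set x; y]) = (z \in perp x) && (z \in perp y).
Proof.
apply/perpSP/andP => [zA|[zx zy] a /set2P[]->//].
by split; apply: zA; rewrite !inE eqxx ?orbT.
Qed.

Lemma perpS_sub A B : A \subset B -> perpS B \subset perpS A.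
Proof.
move=> AB; apply/subsetP => z /perpSP zB; apply/perpSP => a aA.
exact/zB/(subsetP AB).
Qed.

Lemma sub_perpSK A : A \subset perpS (perpS A).
Proof. by apply/subsetP => a aA; apply/perpSP => z /perpSP zA; rewrite perp_sym zA. Qed.

Lemma triadP A :
  reflect (#|A| = 3 /\ {in A &, forall x y, x != y -> y \notin perp x}) (triad L A).
Proof.
apply: (iffP andP) => [[/eqP A3 /forall_inP nA]|[A3 nA]]; split=> //.
- move=> x y xA yA xy; have /forall_inP/(_ y yA) := nA x xA.
  by rewrite xy inE negb_or eq_sym xy.
- by rewrite A3.
apply/forall_inP => x xA; apply/forall_inP => y yA; apply/implyP => xy.
by have := nA x y xA yA xy; rewrite inE negb_or => /andP[].
Qed.

Lemma triad3 x y z : y \notin perp x -> z \notin perp x -> z \notin perp y ->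
  triad L [set x; y; z].
Proof.
move=> yx zx zy; apply/triadP; split.
  by rewrite cards3 ?notperp_neq.
by move=> a b /set3P[]-> /set3P[]->; rewrite ?eqxx // perp_sym.
Qed.

Lemma line_card l : l \in L -> #|l| = 3.
Proof. by case: GQ => lines _ _; apply: lines. Qed.

Lemma lines_through_card x : #|[set l in L | x \in l]| = 3.
Proof. by case: GQ. Qed.

Lemma line_perp l x y : l \in L -> x \in l -> y \in l -> y \in perp x.
Proof.
move=> lL xl yl; rewrite inE /collinear; case: eqVneq => //= yx.
by apply/existsP; exists l; rewrite lL xl yl.
Qed.

Lemma perp_line x y : y \in perp x -> exists2 l, l \in L & (x \in l) && (y \in l).
Proof.
rewrite inE /collinear => /orP[/eqP->|/andP[_ /existsP[l /andP[lL xyl]]]]; last by exists l.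
have : 0 < #|[set l in L | x \in l]| by rewrite lines_through_card.
by case/card_gt0P => l; rewrite inE => /andP[lL xl]; exists l; rewrite ?xl.
Qed.

Lemma perp_collinear x y : y \in perp x -> x != y -> collinear L x y.
Proof. by rewrite inE eq_sym => /orP[->|]. Qed.

Lemma perp2_mem_line l x y z : l \in L -> x \in l -> y \in l -> x != y ->
  z \in perp x -> z \in perp y -> z \in l.
Proof.
move=> lL xl yl xy zx zy; apply: contraT => zl.
have [_ _ /(_ z l lL zl) one] := GQ.
have zx' : collinear L z x.
  by apply: perp_collinear; [rewrite -perp_sym | apply: contraNneq zl => ->].
have zy' : collinear L z y.
  by apply: perp_collinear; [rewrite -perp_sym | apply: contraNneq zl => ->].
have sub : [set x; y] \subset [set t in l | collinear L z t].
  by apply/subsetP => t /set2P[]->; rewrite inE ?xl ?yl.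
by have := subset_leq_card sub; rewrite one cards2 xy.
Qed.

Lemma line_meets_perp l x : l \in L -> exists2 t, t \in l & t \in perp x.
Proof.
move=> lL; case: (boolP (x \in l)) => [xl|xl]; first by exists x; rewrite ?perp_refl.
have [_ _ /(_ x l lL xl) one] := GQ.
have : 0 < #|[set t in l | collinear L x t]| by rewrite one.
case/card_gt0P => t; rewrite inE => /andP[tl xt].
by exists t; rewrite // inE xt orbT.
Qed.

Lemma line_uniq l m x y : l \in L -> m \in L -> x != y ->
  x \in l -> y \in l -> x \in m -> y \in m -> l = m.
Proof.
move=> lL mL xy xl yl xm ym; apply/setP => z; apply/idP/idP => zl.
  by apply: (perp2_mem_line mL xm ym xy); rewrite perp_sym (line_perp lL).
by apply: (perp2_mem_line lL xl yl xy); rewrite perp_sym (line_perp mL).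
Qed.

Lemma perpS2_line l x y : l \in L -> x \in l -> y \in l -> x != y -> perpS [set x; y] = l.
Proof.
move=> lL xl yl xy; apply/setP => z; rewrite perpS2E.
apply/andP/idP => [[zx zy]|zl]; first exact: (perp2_mem_line lL xl yl xy).
by rewrite !(line_perp lL _ zl).
Qed.

Lemma perpS_line l : l \in L -> perpS l = l.
Proof.
move=> lL; have /card_gt1P[x [y [xl yl xy]]] : 1 < #|l| by rewrite line_card.
apply/eqP; rewrite eqEsubset -{2}(perpS2_line lL xl yl xy) perpS_sub ?andbT.
  by apply/subsetP => z zl; apply/perpSP => a al; apply: line_perp lL al zl.
by apply/subsetP => a /set2P[]->.
Qed.

Lemma perp2_notperp x y a b : y \notin perp x ->
  a \in perpS [set x; y] -> b \in perpS [set x; y] -> a != b -> b \notin perp a.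
Proof.
rewrite !perpS2E => yx /andP[ax ay] /andP[bx by_] ab; apply/negP => /perp_line[l lL /andP[al bl]].
have xl : x \in l by apply: (perp2_mem_line lL al bl ab); rewrite perp_sym.
have yl : y \in l by apply: (perp2_mem_line lL al bl ab); rewrite perp_sym.
by rewrite (line_perp lL xl yl) in yx.
Qed.

Lemma card_perpS2_notperp x y : y \notin perp x -> #|perpS [set x; y]| = 3.
Proof.
move=> yx; set F := [set l in L | x \in l].
have /card_gt2P[l1 [l2 [l3 [[l1F l2F l3F] [n12 n23 n31]]]]] : 2 < #|F|.
  by rewrite lines_through_card.
have FE : F = [set l1; l2; l3] by apply: card3_eq; rewrite ?lines_through_card // eq_sym.
have lineF l : l \in F -> l \in L /\ x \in l by rewrite inE => /andP[].
have proj l : l \in F -> exists t, [/\ t \in l, t \in perpS [set x; y] & t != x].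
  case/lineF => lL xl; have [t tl ty] := line_meets_perp y lL.
  exists t; rewrite perpS2E (line_perp lL xl tl) ty; split=> //.
  by apply: contraNneq yx => <-; rewrite perp_sym.
have proj_uniq l t t' : l \in F -> t \in l -> t' \in l ->
    t \in perpS [set x; y] -> t' \in perpS [set x; y] -> t = t'.
  case/lineF => lL xl tl t'l; rewrite !perpS2E => /andP[_ ty] /andP[_ t'y].
  apply/eqP; apply: contraNT yx => tt'.
  by apply: (line_perp lL xl); apply: (perp2_mem_line lL tl t'l tt'); rewrite perp_sym.
have [t1 [t1l t1P t1x]] := proj _ l1F.
have [t2 [t2l t2P t2x]] := proj _ l2F.
have [t3 [t3l t3P t3x]] := proj _ l3F.
have distinct li lj ti tj : li \in F -> lj \in F -> ti \in li -> tj \in lj -> ti != x ->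
    li != lj -> ti != tj.
  move=> /lineF[liL xli] /lineF[ljL xlj] til tjl tix; apply: contra => /eqP tij.
  by apply/eqP; apply: (line_uniq liL ljL tix) => //; rewrite tij.
have cover : perpS [set x; y] \subset [set t1; t2; t3].
  apply/subsetP => z zP; have zx : z != x.
    by apply: contraNneq yx => zx; move: zP; rewrite perpS2E zx perp_sym => /andP[].
  have [m mL /andP[xm zm]] : exists2 m, m \in L & (x \in m) && (z \in m).
    by apply: perp_line; move: zP; rewrite perpS2E perp_sym => /andP[].
  have : m \in [set l1; l2; l3] by rewrite -FE inE mL.
  case/set3P => mE; subst m; apply/set3P.
  - by constructor 1; apply: (proj_uniq l1).
  - by constructor 2; apply: (proj_uniq l2).
  - by constructor 3; apply: (proj_uniq l3).
apply/eqP; rewrite eqn_leq (leq_trans (subset_leq_card cover)) ?cards3_le //=.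
apply/card_gt2P; exists t1, t2, t3; split; split=> //.
- exact: (distinct _ _ _ _ l1F l2F).
- exact: (distinct _ _ _ _ l2F l3F).
- exact: (distinct _ _ _ _ l3F l1F).
Qed.

Lemma card_perpS2 x y : x != y -> #|perpS [set x; y]| = 3.
Proof.
move=> xy; case: (boolP (y \in perp x)) => [/perp_line[l lL /andP[xl yl]]|yx].
  by rewrite (perpS2_line lL xl yl xy) line_card.
exact: card_perpS2_notperp.
Qed.

Lemma third_line_perp w a b t t' : a \in perp w -> b \in perp w -> b \notin perp a ->
  t \in perp w -> t \notin perp a -> t \notin perp b ->
  t' \in perp w -> t' \notin perp a -> t' \notin perp b -> t' \in perp t.
Proof.
move=> aw bw ba tw ta tb t'w t'a t'b.
have [Ma MaL /andP[wMa aMa]] := perp_line aw.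
have [Mb MbL /andP[wMb bMb]] := perp_line bw.
have [K KL /andP[wK tK]] := perp_line tw.
have [N NL /andP[wN t'N]] := perp_line t'w.
have neq (l m : {set T}) u v : l \in L -> u \in l -> v \in m -> v \notin perp u -> l != m.
  by move=> lL ul vm vu; apply: contraNneq vu => lm; rewrite (line_perp lL ul) ?lm.
have : N \in [set Ma; Mb; K].
  rewrite -(card3_eq (lines_through_card w)) ?inE ?MaL ?MbL ?KL ?NL ?wMa ?wMb ?wK ?wN //.
  - exact: (neq _ _ _ _ MaL aMa bMb ba).
  - by rewrite eq_sym; apply: (neq _ _ _ _ KL tK aMa); rewrite perp_sym.
  - by rewrite eq_sym; apply: (neq _ _ _ _ KL tK bMb); rewrite perp_sym.
case/set3P => NE; last by rewrite (line_perp KL tK) -?NE.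
- by rewrite (line_perp MaL aMa) -?NE in t'a.
- by rewrite (line_perp MbL bMb) -?NE in t'b.
Qed.

Lemma line_proj_avoid s c w : c \in perp s -> c != s -> c \notin perp w -> s \notin perp w ->
  exists t, [/\ t \in perp s, t \in perp c, t != c, t \in perp w &
    forall a, a \in perp s -> c \notin perp a -> t \notin perp a].
Proof.
move=> cs cns cw sw; have [l lL /andP[sl cl]] := perp_line cs.
have [t tl tw] := line_meets_perp w lL.
have tc : t != c by apply: contraNneq cw => <-.
have ts : t != s by apply: contraNneq sw => <-.
exists t; split; rewrite ?(line_perp lL sl) ?(line_perp lL cl) //.
move=> a aS; apply: contra => ta; rewrite (line_perp lL _ cl) //.
by apply: (perp2_mem_line lL tl sl ts _ aS); rewrite perp_sym.
Qed.

Lemma perpS2_perp_third x y a b c w : y \notin perp x ->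
  a \in perpS [set x; y] -> b \in perpS [set x; y] -> c \in perpS [set x; y] ->
  a != b -> a != c -> b != c ->
  w \in perpS [set a; b] -> w \notin perp x -> w \notin perp y -> c \in perp w.
Proof.
move=> yx aP bP cP ab ac bc wP wx wy; apply: contraT => cw.
have ba := perp2_notperp yx aP bP ab.
have ca := perp2_notperp yx aP cP ac.
have cb := perp2_notperp yx bP cP bc.
move: (aP) (bP) (cP) (wP); rewrite !perpS2E.
move=> /andP[ax ay] /andP[bx by_] /andP[cx cy] /andP[wa wb].
have cnx : c != x by apply: contraNneq yx => <-; rewrite perp_sym.
have cny : c != y by apply: contraNneq yx => <-.
have xw : x \notin perp w by rewrite perp_sym.
have yw : y \notin perp w by rewrite perp_sym.
(* The projections t1, t2 of w on the lines cx and cy avoid the lines wa and wb,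
   so they lie on the third line through w, and then so does c. *)
have [t1 [t1x t1c t1nc t1w t1ab]] := line_proj_avoid cx cnx cw xw.
have [t2 [t2y t2c t2nc t2w t2ab]] := line_proj_avoid cy cny cw yw.
have aw : a \in perp w by rewrite perp_sym.
have bw : b \in perp w by rewrite perp_sym.
have t2t1 : t2 \in perp t1.
  exact: third_line_perp aw bw ba t1w (t1ab a ax ca) (t1ab b bx cb)
                         t2w (t2ab a ay ca) (t2ab b by_ cb).
have [t12|t12] := eqVneq t1 t2.
  have t1P : t1 \in perpS [set x; y] by rewrite perpS2E t1x t12 t2y.
  have ct1 : c != t1 by rewrite eq_sym.
  by have := perp2_notperp yx cP t1P ct1; rewrite t1c.
have [l lL /andP[t1l t2l]] := perp_line t2t1.
have wl : w \in l by apply: (perp2_mem_line lL t1l t2l t12); rewrite perp_sym.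
have cl : c \in l by apply: (perp2_mem_line lL t1l t2l t12); rewrite perp_sym.
by rewrite (line_perp lL wl cl) in cw.
Qed.

Lemma perpS2_regular x y : y \notin perp x ->
  exists w, [/\ w \notin perp x, w \notin perp y & perpS [set x; y] \subset perp w].
Proof.
move=> yx; have P3 := card_perpS2_notperp yx.
have /card_gt1P[a [b [aP bP ab]]] : 1 < #|perpS [set x; y]| by rewrite P3.
have ba := perp2_notperp yx aP bP ab.
have [xQ yQ] : x \in perpS [set a; b] /\ y \in perpS [set a; b].
  by move: aP bP; rewrite !perpS2E !(perp_sym _ x) !(perp_sym _ y) => /andP[-> ->] /andP[-> ->].
have [w [wQ wx wy]] : exists w, [/\ w \in perpS [set a; b], w != x & w != y].
  by apply: card3_avoid2; rewrite card_perpS2_notperp.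
have wx' : w \notin perp x by apply: (perp2_notperp ba xQ wQ); rewrite eq_sym.
have wy' : w \notin perp y by apply: (perp2_notperp ba yQ wQ); rewrite eq_sym.
exists w; split=> //; apply/subsetP => c cP.
have [->|ca] := eqVneq c a.
  by rewrite perp_sym; move: wQ; rewrite perpS2E => /andP[].
have [->|cb] := eqVneq c b.
  by rewrite perp_sym; move: wQ; rewrite perpS2E => /andP[].
by apply: (perpS2_perp_third yx aP bP cP ab _ _ wQ wx' wy'); rewrite eq_sym.
Qed.

Definition line_or_ctriad A : bool := (A \in L) || complete_triad L A.

Lemma pair_span x y : x != y -> exists z,
  [/\ #|[set x; y; z]| = 3, line_or_ctriad [set x; y; z] & perpS [set x; y; z] = perpS [set x; y]].
Proof.
move=> xy; case: (boolP (y \in perp x)) => [/perp_line[l lL /andP[xl yl]]|yx].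
  have [z [zl zx zy]] : exists z, [/\ z \in l, z != x & z != y].
    by apply: card3_avoid2; rewrite line_card.
  have lE : l = [set x; y; z] by apply: card3_eq; rewrite 1?line_card // eq_sym.
  exists z; rewrite -lE /line_or_ctriad lL perpS_line ?(perpS2_line lL) ?line_card //.
have [w [wx wy /subsetP sub]] := perpS2_regular yx.
have xyw : perpS [set x; y; w] = perpS [set x; y].
  apply/setP => z; apply/perpSP/idP => [zA|zP a /set3P[]->].
  - by rewrite perpS2E !zA // !inE eqxx ?orbT.
  - by move: zP; rewrite perpS2E => /andP[].
  - by move: zP; rewrite perpS2E => /andP[].
  - exact: sub.
exists w; rewrite /line_or_ctriad /complete_triad xyw triad3 ?card_perpS2_notperp ?orbT //.
by split; rewrite // cards3 ?(notperp_neq wx) ?(notperp_neq wy).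
Qed.

Lemma line_or_ctriad_perpS A x y z : line_or_ctriad A -> x \in A -> y \in A -> x != y ->
  z \in perp x -> z \in perp y -> z \in perpS A.
Proof.
case/orP => [AL | /andP[/triadP[_ nA] /eqP A3]] xA yA xy zx zy.
  rewrite perpS_line //; apply: (perp2_mem_line AL xA yA xy zx zy).
have AE : perpS A = perpS [set x; y].
  apply/eqP; rewrite eqEcard A3 card_perpS2 // leqnn andbT perpS_sub //.
  by apply/subsetP => a /set2P[]->.
by rewrite AE perpS2E zx zy.
Qed.

Lemma line_or_ctriad_perpSK A : line_or_ctriad A ->
  line_or_ctriad (perpS A) /\ perpS (perpS A) = A.
Proof.
case/orP => [AL | /andP[/triadP[A3 nA] /eqP P3]].
  by rewrite !perpS_line // /line_or_ctriad AL.
have /card_gt1P[x [y [xA yA xy]]] : 1 < #|A| by rewrite A3.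
have PA : perpS A \subset perpS [set x; y].
  by apply: perpS_sub; apply/subsetP => a /set2P[]->.
have nP : {in perpS A &, forall u v, u != v -> v \notin perp u}.
  move=> u v uP vP; apply: (perp2_notperp (nA x y xA yA xy)); exact: (subsetP PA).
have /card_gt1P[u [v [uP vP uv]]] : 1 < #|perpS A| by rewrite P3.
have AK : perpS (perpS A) = A.
  apply/eqP; rewrite eq_sym eqEcard sub_perpSK A3 -(card_perpS2_notperp (nP u v uP vP uv)).
  by apply/subset_leq_card/perpS_sub/subsetP => a /set2P[]->.
split=> //; rewrite /line_or_ctriad /complete_triad AK A3 eqxx andbT.
by apply/orP; right; apply/triadP.
Qed.

Lemma quadrangle_third p q v : q != v ->
  exists m n, [/\ m != p, n != q, n != v &
    [/\ m \in perpS [set q; v], n \in perp p & n \in perp m]].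
Proof.
move=> qv.
have [m [mP mp _]] : exists m, [/\ m \in perpS [set q; v], m != p & m != p].
  by apply: card3_avoid2; rewrite card_perpS2.
have [n [nP nq nv]] : exists n, [/\ n \in perpS [set p; m], n != q & n != v].
  by apply: card3_avoid2; rewrite card_perpS2 // eq_sym.
by exists m, n; move: nP; rewrite perpS2E => /andP[np nm].
Qed.

End GQ.

Section DiagonalGeometry.
Variables (T : finType) (L : {set {set T}}).
Hypothesis GQ : is_GQ22 L.

Local Notation perp := (perp L).
Local Notation perpS := (perpS L).
Local Notation calS := (calL L L id).
Local Notation colS := (collinear calS).

Lemma calL_id_triple x y z u v w : #|[set x; y; z]| = 3 -> line_or_ctriad L [set x; y; z] ->
  [set u; v; w] = perpS [set x; y; z] -> #|[set u; v; w]| = 3 ->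
  [set (x, u); (y, v); (z, w)] \in calS.
Proof.
move=> T3 lct uvwE U3; rewrite inE /= !imset3 /= T3 U3 -[_ || _]/(line_or_ctriad L _) lct.
rewrite uvwE !eqxx !andbT.
apply/andP; split.
  apply/subsetP => s sX; rewrite inE.
  have /perpSP : s.2 \in perpS [set x; y; z].
    by rewrite -uvwE; case/set3P: sX => ->; rewrite !inE eqxx ?orbT.
  by apply; case/set3P: sX => ->; rewrite !inE eqxx ?orbT.
have := leq_imset_card fst [set (x, u); (y, v); (z, w)].
by rewrite imset3 /= T3 eqn_leq cards3_le => ->.
Qed.

Lemma calL_id_collinear x y u v : x != y -> u != v ->
  u \in perp x -> u \in perp y -> v \in perp x -> v \in perp y -> colS (x, u) (y, v).
Proof.
move=> xy uv ux uy vx vy; have [z [T3 lct TE]] := pair_span GQ xy.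
have P3 := card_perpS2 GQ xy.
have [w [wP wu wv]] : exists w, [/\ w \in perpS [set x; y], w != u & w != v].
  by apply: card3_avoid2; rewrite P3.
have uvwE : [set u; v; w] = perpS [set x; y; z].
  rewrite TE (card3_eq P3 (_ : u \in _) (_ : v \in _) wP uv) ?perpS2E ?ux ?uy ?vx ?vy //.
  - by rewrite eq_sym.
  - by rewrite eq_sym.
apply/andP; split; first by apply: contraNneq xy => -[->].
apply/existsP; exists [set (x, u); (y, v); (z, w)].
rewrite calL_id_triple // ?uvwE ?TE ?P3 //.
by rewrite !inE !eqxx ?orbT.
Qed.

Lemma mem_calP_id s : (s \in calP L id) = (s.2 \in perp s.1).
Proof. by rewrite !inE. Qed.

Definition matched (s t : T * T) : bool := (s.1 \in perp t.2) == (s.2 \in perp t.1).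

Lemma matched_dist_le2 s t : s \in calP L id -> t \in calP L id -> matched s t ->
  dist_le calS s t 2.
Proof.
case: s t => p q [y v]; rewrite !mem_calP_id /matched /= => qp vy.
case: (boolP (p \in perp v)) => pv; case: (boolP (q \in perp y)) => qy //= _.
  have [<-|py] := eqVneq p y; have [<-|qv] := eqVneq q v.
  - exact: dist_le_refl.
  - have [m [n [mp nq nv [mP np nm]]]] := quadrangle_third GQ p qv.
    move: mP; rewrite perpS2E => /andP[mq mv].
    apply: (dist_le_path2 (m := (m, n))); apply: calL_id_collinear;
      by rewrite // 1?eq_sym // perp_sym.
  - have [m [n [mq np ny [mP nq nm]]]] := quadrangle_third GQ q py.
    move: mP; rewrite perpS2E => /andP[mp my].
    apply: (dist_le_path2 (m := (n, m))); apply: calL_id_collinear;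
      by rewrite // 1?eq_sym // perp_sym.
  - by apply: dist_le_col; apply: calL_id_collinear; rewrite // perp_sym.
have [l lL /andP[pl ql]] := perp_line GQ qp.
have [m ml mv] := line_meets_perp GQ v lL.
have [n nl ny] := line_meets_perp GQ y lL.
have onl a b : a \in l -> b \in l -> b \in perp a := line_perp lL.
have pm : p != m by apply: contraNneq pv => ->.
have qn : q != n by apply: contraNneq qy => ->.
have my : m != y by apply: contraNneq qy => <-; exact: onl.
have nv : n != v by apply: contraNneq pv => <-; exact: onl.
apply: (dist_le_path2 (m := (m, n))).
  exact: calL_id_collinear pm qn qp (onl m q ml ql) (onl p n pl nl) (onl m n ml nl).
by apply: (calL_id_collinear my nv (onl m n ml nl) ny _ vy); rewrite perp_sym.
Qed.

Lemma calL_unmatched_differ Ln p q z z' : Ln \in calS -> q \in perp p ->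
  {in Ln, forall t, ~~ matched (p, q) t} ->
  z \in Ln -> z' \in Ln -> z != z' -> (q \in perp z.1) != (q \in perp z'.1).
Proof.
move=> LnS qp unm zL z'L zz'; apply/negP => /eqP E.
move: LnS; rewrite inE /= imset_id => /and5P[/subsetP LnP /eqP Ln3 /eqP T3 lct].
case/andP => /eqP U3 /eqP UE.
have [lct2 T2K] := line_or_ctriad_perpSK GQ lct; rewrite -UE in lct2 T2K.
have inj1 : {in Ln &, injective fst} by apply/imset_injP; rewrite T3 Ln3.
have inj2 : {in Ln &, injective snd} by apply/imset_injP; rewrite U3 Ln3.
have z1 : z.1 != z'.1 by apply: contra zz' => /eqP/inj1 ->.
have z2 : z.2 != z'.2 by apply: contra zz' => /eqP/inj2 ->.
have matched_at t : t \in Ln -> (t.1 == p) || (t.2 == q) -> False.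
  move=> tL /orP[]/eqP tE; have := unm t tL; have := LnP t tL.
  - by rewrite mem_calP_id /matched /= tE perp_sym qp => ->.
  - by rewrite mem_calP_id /matched /= tE => ->; rewrite perp_sym qp.
case: (boolP (q \in perp z.1)) => qz.
  have : q \in perpS [set t.1 | t in Ln].
    by apply: (line_or_ctriad_perpS GQ lct (imset_f _ zL) (imset_f _ z'L) z1); rewrite -?E.
  by rewrite -UE => /imsetP[t tL qt]; apply: (matched_at t tL); rewrite qt eqxx orbT.
have pz t : t \in Ln -> q \notin perp t.1 -> p \in perp t.2.
  by move=> tL; have := unm t tL; rewrite /matched /=; case: (p \in _); case: (q \in _).
have : p \in perpS [set t.2 | t in Ln].
  apply: (line_or_ctriad_perpS GQ lct2 (imset_f _ zL) (imset_f _ z'L) z2);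
    by apply: pz; rewrite -?E.
by rewrite T2K => /imsetP[t tL pt]; apply: (matched_at t tL); rewrite pt eqxx.
Qed.

Lemma calL_matched Ln s a b c : Ln \in calS -> s \in calP L id ->
  a \in Ln -> b \in Ln -> c \in Ln -> a != b -> a != c -> b != c ->
  [|| matched s a, matched s b | matched s c].
Proof.
move=> LnS sP aLn bLn cLn ab ac bc; case: s sP => p q; rewrite mem_calP_id /= => qp.
have Ln3 : #|Ln| = 3 by move: LnS; rewrite inE /= => /and3P[_ /eqP].
apply: contraT; rewrite !negb_or => /and3P[na nb nc].
have unm : {in Ln, forall t, ~~ matched (p, q) t}.
  by rewrite (card3_eq Ln3 aLn bLn cLn ab ac bc) => t /set3P[]->.
have differ := calL_unmatched_differ LnS qp unm.
have pigeon (x y z : bool) : [|| x == y, x == z | y == z] by case: x; case: y; case: z.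
case/or3P: (pigeon (q \in perp a.1) (q \in perp b.1) (q \in perp c.1)) => /eqP E.
- by have := differ a b aLn bLn ab; rewrite E eqxx.
- by have := differ a c aLn cLn ac; rewrite E eqxx.
- by have := differ b c bLn cLn bc; rewrite E eqxx.
Qed.

Lemma calL_id_dist_third Ln s a b c : Ln \in calS -> s \in calP L id ->
  a \in Ln -> b \in Ln -> c \in Ln -> a != b -> c != a -> c != b ->
  gdist calS s a 3 -> gdist calS s b 3 -> gdist calS s c 2.
Proof.
move=> LnS sP aLn bLn cLn ab ca cb sa sb.
have LnP : Ln \subset calP L id by move: LnS; rewrite inE => /andP[].
have far t : t \in Ln -> gdist calS s t 3 -> ~~ matched s t.
  move=> tLn st; apply/negP => /(matched_dist_le2 sP (subsetP LnP t tLn)).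
  exact: gdist_dist_le st.
have := calL_matched LnS sP aLn bLn cLn ab; rewrite (negbTE (far a aLn sa)) (negbTE (far b bLn sb)).
rewrite eq_sym ca eq_sym cb => /(_ isT isT) /= /(matched_dist_le2 sP (subsetP LnP c cLn)) sc.
apply: (gdist_of_dist_le sc _ sa); rewrite /collinear ca; apply/existsP; exists Ln.
by rewrite LnS cLn aLn.
Qed.

End DiagonalGeometry.

Section Isomorphism.
Variables (T1 T2 : finType) (L1 : {set {set T1}}) (L2 : {set {set T2}}) (h : T1 -> T2).
Hypothesis iso : geom_iso L1 L2 h.

Lemma collinear_iso x y : collinear L2 (h x) (h y) = collinear L1 x y.
Proof.
have [[g hK gK] hL] := iso; rewrite /collinear (can_eq hK); congr (_ && _).
apply/existsP/existsP => -[l /and3P[lL xl yl]].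
  have hgl : h @: (g @: l) = l by rewrite -imset_comp (eq_imset _ gK) imset_id.
  by exists (g @: l); rewrite hL hgl lL -(hK x) -(hK y) !imset_f.
by exists (h @: l); rewrite -hL lL !imset_f.
Qed.

Lemma mem_perp_iso x y : (h y \in perp L2 (h x)) = (y \in perp L1 x).
Proof. by rewrite !inE (inj_eq (bij_inj (proj1 iso))) collinear_iso. Qed.

Lemma perpS_iso (A : {set T1}) : perpS L2 (h @: A) = h @: perpS L1 A.
Proof.
have [[g hK gK] _] := iso; apply/setP => z; rewrite -(gK z) mem_imset; last exact: can_inj hK.
apply/bigcapP/bigcapP => zA a.
  by move=> aA; rewrite -mem_perp_iso zA ?imset_f.
by case/imsetP => a' a'A ->; rewrite mem_perp_iso zA.
Qed.

Lemma triad_iso (A : {set T1}) : triad L2 (h @: A) = triad L1 A.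
Proof.
have h_inj := bij_inj (proj1 iso).
rewrite /triad card_imset //; congr (_ && _).
apply/forall_inP/forall_inP => nA x xA; apply/forall_inP => y yA.
  have /forall_inP/(_ _ (imset_f h yA)) := nA _ (imset_f h xA).
  by rewrite (inj_eq h_inj) collinear_iso.
case/imsetP: xA yA => x' x'A -> /imsetP[y' y'A ->].
by have /forall_inP/(_ _ y'A) := nA _ x'A; rewrite (inj_eq h_inj) collinear_iso.
Qed.

Lemma complete_triad_iso (A : {set T1}) : complete_triad L2 (h @: A) = complete_triad L1 A.
Proof.
by rewrite /complete_triad triad_iso perpS_iso card_imset //; apply: bij_inj (proj1 iso).
Qed.

Lemma gdist_iso x y n : gdist L2 (h x) (h y) n <-> gdist L1 x y n.
Proof.
have [[g hK gK] _] := iso.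
have [hgK ghK] : cancel (map g) (map h) /\ cancel (map h) (map g) by split; apply: mapK.
have pathE s : path (collinear L2) (h x) s = path (collinear L1) x (map g s).
  by rewrite -{1}(hgK s) path_map; apply: eq_path => ? ?; apply: collinear_iso.
have lastE s : (last x (map g s) == y) = (last (h x) s == h y).
  by rewrite -(can_eq hK) -last_map hgK.
split=> -[[s [xs /eqP sy sn]] min]; split.
- by exists (map g s); rewrite size_map -pathE; split=> //; apply/eqP; rewrite lastE.
- move=> s' xs' s'y; rewrite -(size_map h) min // ?pathE ?ghK //.
  by apply/eqP; rewrite -lastE ghK s'y.
- by exists (map h s); rewrite size_map pathE ghK; split=> //; apply/eqP; rewrite -lastE ghK.
- move=> s' xs' s'y; rewrite -(size_map g) min // -?pathE //.
  by apply/eqP; rewrite lastE s'y.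
Qed.

End Isomorphism.

Lemma calL_iso (P P' : finType) (L : {set {set P}}) (L' : {set {set P'}}) (f : P -> P') :
  geom_iso L L' f -> geom_iso (calL L L' f) (calL L' L' id) (fun s => (f s.1, s.2)).
Proof.
move=> iso; have [[g fK gK] fL] := iso.
set h := fun s : P * P' => (f s.1, s.2).
have hK : cancel h (fun s => (g s.1, s.2)) by case=> x u; rewrite /h /= fK.
split; first by exists (fun s => (g s.1, s.2)) => // -[x u]; rewrite /h /= gK.
move=> X; have fst_h : [set s.1 | s in h @: X] = f @: [set s.1 | s in X].
  by rewrite -!imset_comp.
have snd_h : [set s.2 | s in h @: X] = [set s.2 | s in X] by rewrite -!imset_comp.
rewrite !inE /= fst_h snd_h imset_id (card_imset _ (can_inj hK)).
rewrite (card_imset _ (can_inj fK)) -fL (complete_triad_iso iso).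
have -> : calP L' f = h @^-1: calP L' id by apply/setP => s; rewrite !inE.
by rewrite sub_imset_pre.
Qed.

Theorem proposition3p6 (P P' : finType) (L : {set {set P}}) (L' : {set {set P'}})
  (f : P -> P') :
  is_GQ22 L -> is_GQ22 L' -> geom_iso L L' f ->
  forall (Ln : {set P * P'}) (theta a b c : P * P'),
    Ln \in calL L L' f -> theta \in calP L' f ->
    a \in Ln -> b \in Ln -> c \in Ln -> a != b -> c != a -> c != b ->
    gdist (calL L L' f) theta a 3 -> gdist (calL L L' f) theta b 3 ->
    gdist (calL L L' f) theta c 2.
Proof.
move=> _ GQ' iso Ln theta a b c LnS thetaP aLn bLn cLn ab ca cb.
have hiso := calL_iso iso; set h := fun s : P * P' => (f s.1, s.2) in hiso.
have [h_bij hL] := hiso; have h_inj := bij_inj h_bij.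
move=> /(gdist_iso hiso) theta_a /(gdist_iso hiso) theta_b; apply/(gdist_iso hiso).
apply: (calL_id_dist_third GQ' (_ : h @: Ln \in _) (_ : h theta \in _)
  (imset_f h aLn) (imset_f h bLn) (imset_f h cLn)) => //.
- by rewrite -hL.
- by move: thetaP; rewrite !inE.
- by rewrite (inj_eq h_inj).
- by rewrite (inj_eq h_inj).
- by rewrite (inj_eq h_inj).
Qed.
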